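(* For a ring $R$, the following are equivalent: (1) $R$ is uniquely weakly $J$-clean; (2) $R/J(R)$ is semi Boolean and idempotents can be lifted uniquely weakly modulo $J(R)$.
   Context: All rings are associative with identity; $J(R)$ is the Jacobson radical and $Idem(R)$ the set of idempotents. $R$ is uniquely weakly $J$-clean if for every $x\in R$ there exists a unique $e\in Idem(R)$ with $x-e\in J(R)$ or $x+e\in J(R)$. A ring $A$ is semi Boolean if for every $x\in A$, $x^2=x$ or $x^2=-x$. Idempotents can be lifted uniquely weakly modulo an ideal $I$ if for every $x\in R$ with $x^2-x\in I$ there exists a unique $e\in Idem(R)$ with $x-e\in I$ or $x+e\in I$. *)

From HB Require Import structures.
From mathcomp Require Import all_boot all_order all_algebra.
Set Implicit Arguments. Unset Strict Implicit. Unset Printing Implicit Defensive.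
Import GRing.Theory.
Local Open Scope ring_scope.

Definition isUnit (R : pzRingType) (u : R) : Prop :=
  exists v : R, u * v = 1 /\ v * u = 1.

(* Jacobson radical J(R): x \in J(R) iff 1 - y x is a unit for every y. *)
Definition inJ (R : pzRingType) (x : R) : Prop :=
  forall y : R, isUnit (1 - y * x).

Definition idem (R : pzRingType) (e : R) : Prop := e * e = e.

Definition uniquely_weakly_J_clean (R : pzRingType) : Prop :=
  forall x : R, exists! e : R, idem e /\ (inJ (x - e) \/ inJ (x + e)).

(* R / J(R) is semi Boolean: every class [x] satisfies [x]^2 = [x] or
   [x]^2 = -[x], i.e. x^2 - x \in J(R) or x^2 + x \in J(R). *)
Definition quotJ_semi_Boolean (R : pzRingType) : Prop :=
  forall x : R, inJ (x * x - x) \/ inJ (x * x + x).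

Definition idem_lift_uniquely_weakly (R : pzRingType) (I : R -> Prop) : Prop :=
  forall x : R, I (x * x - x) ->
    exists! e : R, idem e /\ (I (x - e) \/ I (x + e)).

(* An element congruent to an idempotent modulo J(R) squares to itself modulo
   J(R), and x + e \in J(R) is the same as (-x) - e \in J(R); hence a weakly
   J-clean ring has a semi Boolean quotient. Conversely, when R/J(R) is semi
   Boolean, either x or -x is idempotent modulo J(R), and the weak J-clean
   condition is invariant under x |-> -x, so the unique weak lift of x or of
   -x is the unique idempotent required for x. *)

From mathcomp Require Import all_boot all_algebra.
Set Implicit Arguments. Unset Strict Implicit.
Local Open Scope ring_scope.
Import GRing.Theory.

Section JacobsonRadical.
Variable R : pzRingType.
Implicit Types a b x y e : R.

Lemma isUnitM a b : isUnit a -> isUnit b -> isUnit (a * b).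
Proof.
move=> [va [ava vaa]] [vb [bvb vbb]]; exists (vb * va); split.
  by rewrite mulrA -(mulrA a) bvb mulr1 ava.
by rewrite mulrA -(mulrA vb) vaa mulr1 vbb.
Qed.

Lemma isUnit_1subC a b : isUnit (1 - b * a) -> isUnit (1 - a * b).
Proof.
move=> [v [bav vba]]; exists (1 + a * v * b); split.
  have -> : (1 - a * b) * (1 + a * v * b)
            = 1 - a * b + a * ((1 - b * a) * v) * b.
    rewrite mulrBl mul1r mulrDr mulr1 [(1 - b * a) * v]mulrBl mul1r.
    rewrite mulrBr mulrBl !mulrA opprD !addrA; congr (_ - _); exact: addrAC.
  by rewrite bav mulr1 subrK.
have -> : (1 + a * v * b) * (1 - a * b)
          = 1 - a * b + a * (v * (1 - b * a)) * b.
  rewrite mulrDl mul1r mulrBr mulr1 [v * (1 - b * a)]mulrBr mulr1.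
  by rewrite mulrBr mulrBl !mulrA.
by rewrite vba mulr1 subrK.
Qed.

Lemma inJ0 : inJ (0 : R).
Proof. by move=> y; rewrite mulr0 subr0; exists 1; rewrite mulr1. Qed.

Lemma inJN x : inJ x -> inJ (- x).
Proof. by move=> Jx y; rewrite mulrN -mulNr. Qed.

Lemma inJMl a x : inJ x -> inJ (a * x).
Proof. by move=> Jx y; rewrite mulrA. Qed.

Lemma inJMr x a : inJ x -> inJ (x * a).
Proof. by move=> Jx y; rewrite mulrA; apply: isUnit_1subC; rewrite mulrA. Qed.

Lemma inJD x y : inJ x -> inJ y -> inJ (x + y).
Proof.
move=> Jx Jy z; have [v [xv vx]] := Jx z.
have -> : 1 - z * (x + y) = (1 - z * x) * (1 - v * z * y).
  by rewrite mulrBr mulr1 !mulrA xv mul1r mulrDr opprD addrA.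
by apply: isUnitM; [exists v | apply: Jy].
Qed.

Lemma inJB x y : inJ x -> inJ y -> inJ (x - y).
Proof. by move=> Jx Jy; apply/inJD/inJN. Qed.

Lemma inJ_sqr_sub x y : inJ (x - y) -> inJ (y * y - y) -> inJ (x * x - x).
Proof.
move=> Jxy Jy.
have -> : x * x - x = y * y - y + x * (x - y) + (x - y) * y - (x - y).
  rewrite [x * (x - y)]mulrBr [(x - y) * y]mulrBl !addrA opprB addrA subrK.
  rewrite [_ + x * x - _]addrAC [y * y - y - _]addrAC subrr sub0r.
  by rewrite [- y + _ + y]addrAC addNr add0r.
by apply/inJB => //; apply/inJD; [apply/inJD|]; [|apply: inJMl|apply: inJMr].
Qed.

Lemma idem_inJ_sqr_sub x e : idem e -> inJ (x - e) -> inJ (x * x - x).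
Proof.
move=> ee Jxe; apply: inJ_sqr_sub Jxe _.
by rewrite ee subrr; apply: inJ0.
Qed.

Lemma idem_inJ_sqr_add x e : idem e -> inJ (x + e) -> inJ (x * x + x).
Proof.
move=> ee Jxe; have -> : x * x + x = (- x) * (- x) - (- x) by rewrite mulrNN opprK.
by apply: (idem_inJ_sqr_sub ee); rewrite -opprD; apply: inJN.
Qed.

Lemma weakly_J_near_opp x e :
  (inJ (- x - e) \/ inJ (- x + e)) <-> (inJ (x - e) \/ inJ (x + e)).
Proof.
have -> : - x - e = - (x + e) by rewrite opprD.
have -> : - x + e = - (x - e) by rewrite opprB addrC.
by split=> -[] /inJN; rewrite ?opprK => J; [right | left | right | left].
Qed.

End JacobsonRadical.

Theorem mainTheorem8 (R : pzRingType) :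
  uniquely_weakly_J_clean R <->
  (quotJ_semi_Boolean R /\ idem_lift_uniquely_weakly (@inJ R)).
Proof.
split=> [clean | [semiB lift] x].
  split=> [x | x _]; last exact: clean.
  have [e [[ee [Jxe | Jxe]] _]] := clean x.
    by left; apply: idem_inJ_sqr_sub Jxe.
  by right; apply: idem_inJ_sqr_add Jxe.
have [Jx | Jx] := semiB x; first exact: lift.
have Jnx : inJ ((- x) * (- x) - (- x)) by rewrite mulrNN opprK.
have [e [[ee Jnxe] uniq_e]] := lift _ Jnx.
exists e; split=> [|e' [ee' Jxe']].
  by split=> //; apply/weakly_J_near_opp.
by apply: uniq_e; split=> //; apply/weakly_J_near_opp.
Qed.
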